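(* Let $n\geq 2$ and number the crossings of the $n$-foil $1,\dots,n$ in any fixed order. The set of words of the states of the $n$-foil consisting of exactly two closed curves is \[ \mathcal{F}_n=\left\{1^p01^k01^{n-p-k-2}\;\middle|\; 0\leq p\leq n-2,\ 0\leq k\leq n-p-2\right\}\cup\left\{1^n\right\}. \]
   Context: A (shadow) diagram is a finite collection of closed curves in the plane in general position whose only singularities are finitely many transverse double points, called crossings; over/under information is ignored. At a crossing four corners of complementary regions meet, forming two pairs of opposite corners. Splitting a crossing replaces a small neighbourhood of it by two disjoint arcs in one of two ways, each merging one pair of opposite corners into a channel. A state is the result of choosing a split at every crossing; it is a disjoint union of simple closed curves. The $n$-foil ($n\geq 2$) is drawn as the closure of a $2$-strand braid with $n$ crossings: two strands run once around a central point and cross each other $n$ times (the standard diagram of the $(2,n)$ torus knot or link, e.g. the trefoil for $n=3$, two overlapping circles for $n=2$). Its complementary regions are the unbounded region, a central region, and $n$ bigons; at each crossing the central and unbounded regions occupy one pair of opposite corners and two bigons occupy the other pair. The $A$-split at a crossing is the split merging the corners of the central and unbounded regions; the $B$-split merges the two bigon corners. With crossings numbered $1,\dots,n$, a state is recorded by the binary word whose $i$-th letter is $0$ if an $A$-split is applied at crossing $i$ and $1$ if a $B$-split is applied. Notation: $\sigma^k$ denotes $k$ consecutive copies of the letter $\sigma$ (empty if $k\leq 0$), words are concatenated. *)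

From mathcomp Require Import all_boot all_fingroup.
Set Implicit Arguments. Unset Strict Implicit. Unset Printing Implicit Defensive.

(* Combinatorial model of the n-foil (closure of a 2-strand braid with n
   crossings).  Crossings are numbered 0..n-1 in cyclic order around the
   central point.  Near crossing c there are four endpoints of strand
   arcs, indexed by (c, side, level): side = false (left, towards crossing
   c-1) / true (right, towards crossing c+1); level = false (inner, facing
   the central region) / true (outer, facing the unbounded region).
   The corners at crossing c: between the two left endpoints lies the bigon
   shared with crossing c-1, between the two right endpoints the bigon shared
   with crossing c+1, between the two inner endpoints the central region,
   between the two outer endpoints the unbounded region. *)
Definition foil_pt (n : nat) := ('I_n * bool * bool)%type.

(* The arcs of the diagram outside small neighbourhoods of the crossings:
   the right endpoint of crossing c at a given level is joined to the left
   endpoint of crossing c+1 (mod n) at the same level. *)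
Definition foil_ext n (x : foil_pt n) : foil_pt n :=
  let: (c, s, l) := x in
  if s then (ordS c, false, l) else (ord_pred c, true, l).

(* The two arcs replacing a neighbourhood of crossing c in a state.
   st c = false : A-split (merges the corners of the central and unbounded
     regions): the arcs join the two left endpoints and the two right ones.
   st c = true  : B-split (merges the two bigon corners): the arcs join the
     two inner endpoints and the two outer ones. *)
Definition foil_int n (st : 'I_n -> bool) (x : foil_pt n) : foil_pt n :=
  let: (c, s, l) := x in
  if st c then (c, ~~ s, l) else (c, s, ~~ l).

Definition foil_rel n (st : 'I_n -> bool) : rel (foil_pt n) :=
  fun x y => (foil_ext x == y) || (foil_int st x == y).

Definition foil_ncurves n (st : 'I_n -> bool) : nat :=
  n_comp (foil_rel st) (@predT (foil_pt n)).

(* The split chosen at the geometric crossing c when the crossings are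
   numbered by the bijection num (letter i of the word w is applied at
   crossing num i; letter 1 = true = B-split). *)
Definition word_state n (num : {perm 'I_n}) (w : seq bool) : 'I_n -> bool :=
  fun c => nth false w (num^-1%g c).

Definition Fn (n : nat) (w : seq bool) : Prop :=
  (exists p k, p <= n - 2 /\ k <= n - p - 2 /\
     w = nseq p true ++ false :: nseq k true ++ false :: nseq (n - p - k - 2) true)
  \/ w = nseq n true.

From mathcomp Require Import all_boot all_fingroup.
From mathcomp Require Import zify.
Set Implicit Arguments. Unset Strict Implicit.

(* Along a curve of a state, a B-split lets the strand pass to the next
   crossing on the same level (inner or outer), while an A-split sends it back
   on the other level.  If the state has k > 0 A-splits, every curve reaches
   the outer right endpoint of some A-crossing, and the number of A-crossings
   to the right of the current point, taken modulo k, is constant along the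
   curves and separates these k endpoints: the state has exactly k curves.
   Without A-splits the state is the inner and the outer circle.  So a state
   has two curves iff it has zero or two A-splits, which is the shape of the
   words of F_n. *)

Section ComponentCount.

Variables (T : finType) (e : rel T).

Lemma connect_invariant (rT : Type) (f : T -> rT) :
  (forall x y, e x y -> f x = f y) -> forall x y, connect e x y -> f x = f y.
Proof.
move=> f_e x _ /connectP[p e_p ->].
by elim: p x e_p => //= y p IHp x /andP[/f_e-> /IHp].
Qed.

Hypothesis sym_e : connect_sym e.

Lemma card_le_n_comp (rT : Type) (f : T -> rT) (A : {pred T}) :
  (forall x y, e x y -> f x = f y) -> {in A &, injective f} ->
  #|A| <= n_comp e predT.
Proof.
move=> f_e inj_f.
have inj_root : {in A &, injective (root e)}.
  move=> x y Ax Ay /eqP; rewrite root_connect // => /(connect_invariant f_e).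
  exact: inj_f.
rewrite -(card_in_imset inj_root); apply/subset_leq_card/subsetP => r.
by case/imsetP=> x _ ->; rewrite !inE roots_root.
Qed.

Lemma n_comp_le_card (S : {pred T}) :
  (forall x, exists2 s, s \in S & connect e x s) -> n_comp e predT <= #|S|.
Proof.
move=> S_cover; apply: leq_trans (leq_image_card (root e) S).
apply/subset_leq_card/subsetP => r; rewrite !inE => /andP[/eqP r_root _].
have [s Ss r_s] := S_cover r; apply/imageP; exists s => //.
by rewrite -r_root; apply/rootP.
Qed.

End ComponentCount.

Lemma card_nth_ord (T : Type) (x0 : T) (a : pred T) (n : nat) (s : seq T) :
  size s = n -> #|[pred i : 'I_n | a (nth x0 s i)]| = count a s.
Proof.
move=> <-; rewrite -[in RHS](mkseq_nth x0 s) /mkseq count_map.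
by rewrite -val_enum_ord count_map cardE /enum_mem size_filter filter_predT.
Qed.

Section CyclicOrdinal.

Variable m : nat.

Lemma ordS_val (i : 'I_m.+1) : i < m -> ordS i = i.+1 :> nat.
Proof. by move=> lt_im; rewrite /= modn_small. Qed.

Lemma ordS_max : ordS ord_max = ord0 :> 'I_m.+1.
Proof. by apply: val_inj; rewrite /= modnn. Qed.

Lemma ord_pred_inordS i : i < m -> ord_pred (inord i.+1) = inord i :> 'I_m.+1.
Proof.
move=> lt_im; apply: (@ordS_inj m.+1); rewrite ord_predK.
have lt_i : i < m.+1 by apply: ltnW.
by apply: ord_inj; rewrite ordS_val !inordK.
Qed.

Lemma ord_pred0 : ord_pred ord0 = ord_max :> 'I_m.+1.
Proof. by apply: (@ordS_inj m.+1); rewrite ord_predK ordS_max. Qed.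

End CyclicOrdinal.

Section FoilState.

Variables (m : nat) (st : 'I_m.+1 -> bool).
Local Notation n := m.+1.
Local Notation e := (foil_rel st).

Lemma foil_ext_involutive : involutive (@foil_ext n).
Proof. by case=> [[c [] l]] /=; rewrite ?ordSK ?ord_predK. Qed.

Lemma foil_int_involutive : involutive (foil_int st).
Proof. by case=> [[c s] l] /=; case st_c: (st c); rewrite /= st_c negbK. Qed.

Lemma foil_rel_ext x : e x (foil_ext x).
Proof. by rewrite /foil_rel eqxx. Qed.

Lemma foil_rel_int x : e x (foil_int st x).
Proof. by rewrite /foil_rel eqxx orbT. Qed.

Lemma foil_rel_sym : symmetric e.
Proof.
move=> x y; apply/orP/orP; case=> /eqP<-;
  by [left; rewrite foil_ext_involutive | right; rewrite foil_int_involutive].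
Qed.

Lemma foil_connect_sym : connect_sym e.
Proof. exact/sym_connect_sym/foil_rel_sym. Qed.

Lemma connect_A_level (c : 'I_n) s l l' :
  ~~ st c -> connect e (c, s, l) (c, s, l').
Proof.
move=> A_c; have [<- // | ne_l] := eqVneq l l'.
apply/connect1/orP; right; rewrite /= (negbTE A_c).
by case: l l' ne_l => [] [].
Qed.

Lemma connect_B_pred (c : 'I_n) l :
  st c -> connect e (c, true, l) (ord_pred c, true, l).
Proof.
move=> B_c; apply: connect_trans (connect1 (foil_rel_int _)) _.
by rewrite /= B_c; apply: connect1 (foil_rel_ext _).
Qed.

Lemma connect_B_run c l : c <= m -> (forall i, i <= c -> st (inord i)) ->
  connect e (inord c, true, l) (ord_max, true, l).
Proof.
elim: c => [|c IHc] le_cm B_run.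
  have -> : inord 0 = ord0 :> 'I_n by apply: val_inj; rewrite /= inordK.
  by rewrite -ord_pred0; apply/connect_B_pred; rewrite -(inord_val ord0) B_run.
apply: connect_trans (connect_B_pred _ (B_run _ (leqnn _))) _.
rewrite ord_pred_inordS //; apply: IHc => [|i le_ic]; first exact: ltnW.
by apply: B_run; apply: leqW.
Qed.

Lemma connect_A_below c l : c <= m -> (exists z : 'I_n, (z <= c) && ~~ st z) ->
  exists2 z, ~~ st z & connect e (inord c, true, l) (z, true, false).
Proof.
elim: c => [|c IHc] le_cm [z /andP[le_zc A_z]].
  have -> : inord 0 = z by apply: ord_inj; rewrite inordK //; lia.
  by exists z => //; apply: connect_A_level.
have [B_c | A_c] := boolP (st (inord c.+1)); last first.
  by exists (inord c.+1) => //; apply: connect_A_level.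
have [|z' A_z' c_z'] := IHc (ltnW le_cm).
  exists z; rewrite A_z andbT -ltnS ltn_neqAle le_zc andbT.
  by apply: contraNneq A_z => z_c; rewrite -[z]inord_val z_c B_c.
exists z' => //; apply: connect_trans (connect_B_pred _ B_c) _.
by rewrite ord_pred_inordS.
Qed.

Lemma connect_to_A x : (exists z, ~~ st z) ->
  exists2 z, ~~ st z & connect e x (z, true, false).
Proof.
move=> [z0 A_z0].
have [c [l x_c]] : exists c l, connect e x (c, true, l).
  case: x => [[c [] l]]; first by exists c, l.
  by exists (ord_pred c), l; apply: connect1 (foil_rel_ext _).
suff [z A_z c_z] : exists2 z, ~~ st z & connect e (c, true, l) (z, true, false).
  by exists z => //; apply: connect_trans x_c c_z.
have le_cm : c <= m by rewrite -ltnS.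
rewrite -(inord_val c).
have [/existsP A_below | /existsPn B_below] :=
  boolP [exists z : 'I_n, (z <= c) && ~~ st z].
  exact: connect_A_below.
have [z A_z max_z] :
    exists2 z, ~~ st z & connect e (inord m, true, l) (z, true, false).
  by apply: connect_A_below => //; exists z0; rewrite A_z0 -ltnS ltn_ord.
exists z => //; apply: connect_trans (connect_B_run l le_cm _) _ => [i le_ic|].
  by have := B_below (inord i); rewrite inordK ?le_ic ?negbK //; lia.
by rewrite (_ : ord_max = inord m) //; apply: ord_inj; rewrite inordK.
Qed.

Definition A_crossings : {set 'I_n} := [set c | ~~ st c].

Definition A_after (c : 'I_n) : {set 'I_n} := [set z in A_crossings | c < z].

(* On the external arc entering an A-crossing, #|A_after _| drops by one;
   the extra unit at the left endpoints of A-crossings compensates for it.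
   Only the arc from ord_max back to ord0 changes the height, by
   #|A_crossings|. *)
Definition curve_height (x : foil_pt n) : nat :=
  let: (c, s, l) := x in #|A_after c| + (~~ s && ~~ st c).

Definition curve_index (x : foil_pt n) : nat :=
  curve_height x %% #|A_crossings|.

Lemma card_A_after_ordS (c : 'I_n) : c < m ->
  #|A_after c| = #|A_after (ordS c)| + ~~ st (ordS c).
Proof.
move=> lt_cm; rewrite (cardsD1 (ordS c)) addnC !inE ordS_val // ltnSn andbT.
congr (_ + _); apply: eq_card => z.
rewrite !inE -(inj_eq (@ord_inj _)) ordS_val //.
by rewrite [_.+1 < _]ltn_neqAle eq_sym andbCA.
Qed.

Lemma A_after_max : A_after ord_max = set0.
Proof. by apply/setP => z; rewrite !inE ltnNge -ltnS ltn_ord andbF. Qed.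

Lemma card_A_after_ord0 : #|A_after ord0| + ~~ st ord0 = #|A_crossings|.
Proof.
rewrite [RHS](cardsD1 ord0) inE addnC; congr (_ + _); apply: eq_card => z.
by rewrite !inE -(inj_eq (@ord_inj _)) lt0n andbC.
Qed.

Lemma curve_index_ext (c : 'I_n) l :
  curve_index (c, true, l) = curve_index (ordS c, false, l).
Proof.
rewrite /curve_index /= addn0.
have [lt_cm | le_mc] := ltnP c m; first by rewrite card_A_after_ordS.
have -> : c = ord_max by apply/ord_inj/eqP; rewrite eqn_leq le_mc -ltnS ltn_ord.
by rewrite A_after_max ordS_max card_A_after_ord0 cards0 mod0n modnn.
Qed.

Lemma curve_index_edge x y : e x y -> curve_index x = curve_index y.
Proof.
case/orP=> /eqP <-; case: x => [[c s] l].
  case: s; first exact: curve_index_ext.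
  rewrite -[in LHS](foil_ext_involutive (c, false, l)) /=.
  by rewrite curve_index_ext ord_predK.
by rewrite /curve_index /=; case st_c: (st c); rewrite /= ?st_c ?andbF.
Qed.

Lemma A_after_proper (z1 z2 : 'I_n) : z2 \in A_crossings -> z1 < z2 ->
  A_after z2 \proper A_after z1.
Proof.
move=> A_z2 lt_z12; rewrite inE in A_z2; apply/properP; split.
  by apply/subsetP => z; rewrite !inE => /andP[-> /(ltn_trans lt_z12)].
by exists z2; rewrite !inE ?A_z2 ?lt_z12 ?ltnn ?andbF.
Qed.

Lemma card_A_after_lt (z : 'I_n) :
  z \in A_crossings -> #|A_after z| < #|A_crossings|.
Proof.
move=> A_z; apply/proper_card/properP; split.
  by apply/subsetP => y; rewrite inE => /andP[].
by exists z; rewrite // inE ltnn andbF.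
Qed.

Lemma curve_index_inj :
  {in [set (z, true, false) | z in A_crossings] &, injective curve_index}.
Proof.
move=> _ _ /imsetP[z1 A_z1 ->] /imsetP[z2 A_z2 ->].
rewrite /curve_index /= !addn0 !modn_small ?card_A_after_lt // => eq_card.
congr (_, _, _); apply: ord_inj.
have [lt_z12 | lt_z21 | //] := ltngtP z1 z2.
  by have := proper_card (A_after_proper A_z2 lt_z12); rewrite eq_card ltnn.
by have := proper_card (A_after_proper A_z1 lt_z21); rewrite eq_card ltnn.
Qed.

Lemma foil_ncurves_some_A :
  0 < #|A_crossings| -> foil_ncurves st = #|A_crossings|.
Proof.
move=> A_exists.
pose reps := [set (z, true, false) | z in A_crossings] : {set foil_pt n}.
have card_reps : #|reps| = #|A_crossings| by rewrite card_imset // => z1 z2 [].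
apply/eqP; rewrite eqn_leq -card_reps; apply/andP; split.
  apply: (n_comp_le_card foil_connect_sym) => x.
  have [|z A_z x_z] := connect_to_A x.
    by move: A_exists; rewrite card_gt0 => /set0Pn[z]; rewrite inE; exists z.
  by exists (z, true, false); rewrite // imset_f // inE.
exact: (card_le_n_comp foil_connect_sym curve_index_edge curve_index_inj).
Qed.

Lemma foil_ncurves_all_B : #|A_crossings| = 0 -> foil_ncurves st = 2.
Proof.
move/cards0_eq => A_none.
have B_all c : st c.
  by apply/negbNE; move: (in_set0 c); rewrite -A_none inE => /negbT.
pose reps := [set (ord_max, true, l) | l : bool] : {set foil_pt n}.
have card_reps : #|reps| = 2 by rewrite card_imset ?card_bool // => l1 l2 [].
apply/eqP; rewrite eqn_leq -card_reps; apply/andP; split.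
  apply: (n_comp_le_card foil_connect_sym) => [[[c s] l]].
  exists (ord_max, true, l); first exact: imset_f.
  have c_true : connect e (c, s, l) (c, true, l).
    by case: s => //; apply/connect1/orP; right; rewrite /= B_all.
  apply: connect_trans c_true _; rewrite -(inord_val c).
  by apply: connect_B_run => [|i _]; [rewrite -ltnS | apply: B_all].
apply: (card_le_n_comp foil_connect_sym (f := fun x : foil_pt n => x.2)).
  by move=> [[c s] l] y /orP[] /eqP <- /=; [case: s | rewrite B_all].
by move=> _ _ /imsetP[l1 _ ->] /imsetP[l2 _ ->] /= ->.
Qed.

End FoilState.

Lemma card_A_crossings_word m (num : {perm 'I_m.+1}) (w : seq bool) :
  size w = m.+1 -> #|A_crossings (word_state num w)| = count negb w.
Proof.
move=> size_w; rewrite -(card_nth_ord false negb size_w).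
have -> : A_crossings (word_state num w) =
    (num^-1)%g @^-1: [set i : 'I_m.+1 | ~~ nth false w i].
  by apply/setP => c; rewrite !inE.
by rewrite card_preimset; [apply: eq_card => i; rewrite inE | exact: perm_inj].
Qed.

Lemma count_negb_eq0 (w : seq bool) :
  count negb w = 0 -> w = nseq (size w) true.
Proof. by elim: w => //= -[] w IHw //= /IHw <-. Qed.

Lemma split_first_false (w : seq bool) : 0 < count negb w ->
  exists p r, w = nseq p true ++ false :: r.
Proof.
elim: w => //= -[] w IHw; last by exists 0, w.
by case/IHw=> p [r ->]; exists p.+1, r.
Qed.

Lemma Fn_count n (w : seq bool) :
  size w = n -> Fn n w <-> count negb w = 0 \/ count negb w = 2.
Proof.
move=> <-; split.
  by case=> [[p [k [_ [_ ->]]]] | ->]; [right | left];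
    rewrite ?count_cat /= ?count_cat /= ?count_nseq /= ?mul0n.
case=> [/count_negb_eq0 w_B | two_A]; first by right; rewrite {1}w_B.
have [|p [r w_pr]] := split_first_false (w := w); first by rewrite two_A.
move: two_A; rewrite w_pr count_cat count_nseq /= mul0n add1n => -[one_A].
have [|k [r' r_kr']] := split_first_false (w := r); first by rewrite one_A.
move: one_A; rewrite r_kr' count_cat count_nseq /= mul0n add1n.
move=> -[/count_negb_eq0 r'_B].
left; exists p, k; rewrite !size_cat /= size_cat !size_nseq /=.
split; [lia | split; [lia | ]].
by rewrite {1}r'_B; congr (_ ++ _ :: _ ++ _ :: nseq _ _); lia.
Qed.

Theorem corollary23 (n : nat) (hn : 2 <= n) (num : {perm 'I_n}) (w : seq bool) :
  size w = n ->
  (foil_ncurves (word_state num w) = 2 <-> Fn n w).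
Proof.
case: n hn num w => [|m] // _ num w size_w.
rewrite (Fn_count size_w) -(card_A_crossings_word num size_w).
have [no_A | some_A] := posnP #|A_crossings (word_state num w)|.
  by rewrite foil_ncurves_all_B //; split=> // _; left.
rewrite foil_ncurves_some_A //; split=> [-> | [no_A | //]]; first by right.
by rewrite no_A in some_A.
Qed.
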